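(* For every single-elimination tournament $\mathcal{T}$ with at least $2$ players and every scoring system $\sigma$ of $\mathcal{T}$, \[\dim(\mathcal{T},\sigma)\ge \max_{x\in M(\mathcal{T})}\Big(|P(x)|-\max_{u\in N^-(x)}|P(u)|\Big).\] Moreover, for every such $\mathcal{T}$ there exists a scoring system $\sigma$ for which equality holds.
   Context: A single-elimination tournament is a finite directed graph $\mathcal{T}$ such that: (a) $\mathcal{T}$ has exactly one sink (vertex with no out-neighbours); (b) every non-sink vertex has exactly one out-neighbour; (c) $\mathcal{T}$ has no directed cycles; (d) $|N^-(v)|\ne 1$ for every vertex $v$, where $N^-(v)$ (resp. $N^+(v)$) denotes the set of in-neighbours (resp. out-neighbours) of $v$. The players $P(\mathcal{T})$ are the sources (vertices with no in-neighbours) and the matches are $M(\mathcal{T})=V(\mathcal{T})\setminus P(\mathcal{T})$. For a vertex $u$, $P(u)$ is the set of players $a$ for which there is a directed walk from $a$ to $u$, i.e. a sequence $(u_1,\dots,u_t)$, $t\ge 1$, with $u_1=a$, $u_t=u$, $u_{i+1}\in N^+(u_i)$ (so $P(a)=\{a\}$ for a player $a$). A bracket is a function $B:V(\mathcal{T})\to P(\mathcal{T})$ with $B(a)=a$ for every player $a$ and $B(x)\in\{B(u):u\in N^-(x)\}$ for every match $x$. A scoring system is any function $\sigma:M(\mathcal{T})\to\mathbb{R}_{>0}$. For brackets $B,B'$ let $\mathrm{score}_\sigma(B,B')=\sum_{x\in M(\mathcal{T}):\,B(x)=B'(x)}\sigma(x)$. A set of brackets $\mathcal{B}$ is $\sigma$-resolving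 if for every pair of distinct brackets $B\ne B'$ there is $B_i\in\mathcal{B}$ with $\mathrm{score}_\sigma(B_i,B)\ne\mathrm{score}_\sigma(B_i,B')$. $\dim(\mathcal{T},\sigma)$ denotes the minimum size of a $\sigma$-resolving set. *)

From HB Require Import structures.
From mathcomp Require Import all_boot all_order all_algebra.
From mathcomp Require Import boolp reals.
Set Implicit Arguments. Unset Strict Implicit. Unset Printing Implicit Defensive.
Import Order.TTheory GRing.Theory Num.Theory.

(* A finite directed graph on the vertex type V with edge relation e:
   e u v means there is an arc u -> v (v is an out-neighbour of u). *)
Section SET.
Variable V : finType.
Variable e : rel V.

Definition in_nbrs (v : V) : {set V} := [set u | e u v].
Definition out_nbrs (v : V) : {set V} := [set w | e v w].

Definition is_sink (v : V) : bool := out_nbrs v == set0.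

Definition is_SET : Prop :=
  [/\ #|[set v | is_sink v]| = 1,
      (forall v, ~~ is_sink v -> #|out_nbrs v| = 1),
      (forall v w, e v w -> ~~ connect e w v)
    & (forall v, #|in_nbrs v| != 1)].

Definition players : {set V} := [set v | in_nbrs v == set0].
Definition matches : {set V} := ~: players.

Definition Pset (u : V) : {set V} := [set a in players | connect e a u].

Definition is_bracket (B : {ffun V -> V}) : bool :=
  [forall a in players, B a == a] &&
  [forall x in matches, [exists u in in_nbrs x, B x == B u]].

Variable R : realType.
Variable sigma : V -> R.   (* only its values on matches are used *)

Definition scoring_system : Prop := forall x, x \in matches -> (0 < sigma x)%R.

Definition score (B B' : {ffun V -> V}) : R :=
  (\sum_(x in matches | B x == B' x) sigma x)%R.

Definition resolving (S : {set {ffun V -> V}}) : Prop :=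
  (forall Bi, Bi \in S -> is_bracket Bi) /\
  (forall B B', is_bracket B -> is_bracket B' -> B != B' ->
     exists2 Bi, Bi \in S & score Bi B != score Bi B').

(* dim(T, sigma): the minimum size of a sigma-resolving set of brackets
   (the default value #|{ffun V -> V}| is never smaller than the minimum,
   as the set of all brackets is resolving). *)
Definition tdim : nat :=
  \big[minn/#|{ffun V -> V}|]_(S : {set {ffun V -> V}} | `[< resolving S >]) #|S|.

End SET.

Definition bound (V : finType) (e : rel V) : nat :=
  \max_(x in matches e) (#|Pset e x| - \max_(u in in_nbrs e x) #|Pset e u|).

From HB Require Import structures.
From mathcomp Require Import all_boot all_order all_algebra.
From mathcomp Require Import boolp reals.
From mathcomp Require Import zify.
Import Order.TTheory GRing.Theory Num.Theory.

Set Implicit Arguments. Unset Strict Implicit. Unset Printing Implicit Defensive.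

(* Write margin(x) = |P(x)| - max |P(u)| over the children u of a match x.

   If a resolving set S had fewer than margin(x) brackets, two
   players a1, a2 from different children of x would be picked at x by no
   bracket of S.  The two brackets in which x is won by a1, resp. a2, and which
   agree everywhere else score the same against every bracket of S.

   With the weights 2^rank(x), a score determines the set of
   matches on which two brackets agree.  Let light(x) be the players of P(x)
   outside a largest child of x.  These sets form a laminar family of sets of
   size at most m = max margin, so some colouring k of the players with m
   colours is injective on each of them.  Bracket B_i lets the light player of
   colour i win x when there is one, and the largest child otherwise; then
   every a in light(x) wins x in B_(k a).  A bracket B is recovered from its
   agreements with the B_i, bottom-up: either B(x) is light, hence seen by
   some B_i, or B(x) is the winner of the largest child of x. *)

Definition laminar (T : finType) (F : {set {set T}}) : Prop :=
  {in F &, forall A B : {set T},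
    [|| [disjoint A & B], A \subset B | B \subset A]}.

Lemma laminar_sub (T : finType) (F : {set {set T}}) (A B : {set T}) a :
  laminar F -> A \in F -> B \in F -> a \in A -> a \in B -> #|A| <= #|B| ->
  A \subset B.
Proof.
move=> lam AF BF aA aB AB; case/or3P: (lam A B AF BF) => [dis|//|BA].
  by rewrite (disjointFr dis aA) in aB.
by have /eqP -> : B == A by rewrite eqEcard BA AB.
Qed.

Lemma laminar_coloring (T : finType) (F : {set {set T}}) (m : nat) :
  laminar F -> {in F, forall A : {set T}, #|A| <= m} ->
  exists k : T -> nat,
    {in F, forall A : {set T}, {in A &, injective k} /\ {in A, forall a, k a < m}}.
Proof.
move=> lam Fm.
(* By laminarity, a largest member containing [a] contains all the others. *)
have /choice [M HM] : forall a, exists M : {set T}, forall A, A \in F -> a \in A ->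
    [/\ M \in F, a \in M & A \subset M].
  move=> a.
  case: (pselect (exists2 A, A \in F & a \in A)) => [[A0 A0F aA0]|none]; last first.
    by exists set0 => A AF aA; case: none; exists A.
  exists [arg max_(B > A0 | (B \in F) && (a \in B)) #|B|].
  case: arg_maxnP => [|M0 /andP [M0F aM0] M0max A AF aA]; first by rewrite A0F.
  split=> //; apply: (laminar_sub lam AF M0F aA aM0).
  by apply: M0max; rewrite AF.
exists (fun a => index a (enum (M a))) => A AF.
have sameM : {in A &, forall a b, M a = M b}.
  move=> a b aA bA; have [MaF aMa AMa] := HM a A AF aA.
  have [MbF bMb AMb] := HM b A AF bA.
  apply/eqP; rewrite eqEsubset; apply/andP; split.
    by have [] := HM b (M a) MaF (subsetP AMa b bA).
  by have [] := HM a (M b) MbF (subsetP AMb a aA).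
split=> [a b aA bA /= kab|a aA].
  have [_ aMa _] := HM a A AF aA; have [_ bMb _] := HM b A AF bA.
  rewrite -(sameM a b aA bA) in kab bMb.
  rewrite -mem_enum in aMa.
  by rewrite -(nth_index a aMa) kab nth_index // mem_enum.
have [MaF aMa _] := HM a A AF aA.
by apply: leq_trans (Fm _ MaF); rewrite cardE index_mem mem_enum.
Qed.

Lemma binary_digits_inj n (b b' : 'I_n -> bool) :
  \sum_(i < n) b i * 2 ^ i = \sum_(i < n) b' i * 2 ^ i -> b =1 b'.
Proof.
elim: n b b' => [|n IH] b b' E; first by case.
have split_low (c : 'I_n.+1 -> bool) : \sum_(i < n.+1) c i * 2 ^ i =
    c ord0 + 2 * \sum_(i < n) c (lift ord0 i) * 2 ^ i.
  rewrite big_ord_recl expn0 muln1 big_distrr; congr (_ + _).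
  by apply: eq_bigr => i _; rewrite lift0 expnS mulnCA.
move: E; rewrite !split_low => E.
have low : b ord0 = b' ord0.
  by move: E; case: (b ord0); case: (b' ord0) => //= E; lia.
have high : (fun j => b (lift ord0 j)) =1 (fun j => b' (lift ord0 j)).
  by apply: IH; rewrite low in E; lia.
by move=> i; case: (unliftP ord0 i) => [j ->|->] //; apply: high.
Qed.

Definition pow2_weight (R : realType) (V : finType) (x : V) : R :=
  (2 ^ enum_rank x)%:R.

Lemma sum_pow2_rank (V : finType) (P : pred V) :
  \sum_(x | P x) 2 ^ enum_rank x = \sum_(i < #|V|) P (enum_val i) * 2 ^ i.
Proof.
rewrite (reindex (fun i : 'I_#|V| => enum_val i)) /=; last first.
  by exists enum_rank => i _; rewrite ?enum_valK ?enum_rankK.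
rewrite big_mkcond /=; apply: eq_bigr => i _; rewrite enum_valK.
by case: (P (enum_val i)); rewrite ?mul1n ?mul0n.
Qed.

Lemma score_pow2_agree (R : realType) (V : finType) (e : rel V)
    (B B1 B2 : {ffun V -> V}) :
  score e (@pow2_weight R V) B B1 = score e (@pow2_weight R V) B B2 ->
  forall y, y \in matches e -> (B y == B1 y) = (B y == B2 y).
Proof.
rewrite /score /pow2_weight -!natr_sum => /eqP; rewrite eqr_nat => /eqP.
rewrite !sum_pow2_rank => /binary_digits_inj agree y ym.
by have := agree (enum_rank y); rewrite enum_rankK ym.
Qed.

Lemma score_eq_off (R : realType) (V : finType) (e : rel V) (sigma : V -> R)
    (x : V) (B B1 B2 : {ffun V -> V}) :
  (forall y, y != x -> B1 y = B2 y) -> B x != B1 x -> B x != B2 x ->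
  score e sigma B B1 = score e sigma B B2.
Proof.
move=> off n1 n2; apply: eq_bigl => y; case: (eqVneq y x) => [->|yx].
  by rewrite (negbTE n1) (negbTE n2).
by rewrite off.
Qed.

Lemma tdim_le_card (R : realType) (V : finType) (e : rel V) (sigma : V -> R)
    (S : {set {ffun V -> V}}) :
  resolving e sigma S -> tdim e sigma <= #|S|.
Proof.
by move=> res; rewrite /tdim -minEnat; apply: (@bigmin_le_cond _ nat); apply/asboolP.
Qed.

Section Tournament.

Variables (V : finType) (e : rel V).
Hypothesis tourn : is_SET e.

Lemma connect_first u w : connect e u w -> u != w -> exists2 z, e u z & connect e z w.
Proof.
move=> /connectP [[|z p] /= zp ->]; first by rewrite eqxx.
by move: zp => /andP [uz zp] _; exists z => //; apply/connectP; exists p.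
Qed.

Lemma connect_last u w : connect e u w -> u != w -> exists2 z, connect e u z & e z w.
Proof.
move=> /connectP [p]; elim/last_ind: p => [_ -> /[!eqxx] //|p z _].
rewrite rcons_path last_rcons => /andP [up zp] -> _.
by exists (last u p) => //; apply/connectP; exists p.
Qed.

Lemma mem_Pset a u : (a \in Pset e u) = (a \in players e) && connect e a u.
Proof. by rewrite inE. Qed.

Lemma PsetP a u : reflect (a \in players e /\ connect e a u) (a \in Pset e u).
Proof. by rewrite mem_Pset; apply: andP. Qed.

Lemma Pset_connect u w : connect e u w -> Pset e u \subset Pset e w.
Proof.
by move=> uw; apply/subsetP => a; rewrite !mem_Pset => /andP [-> /connect_trans ->].
Qed.

Lemma player_connect_eq a y : a \in players e -> connect e y a -> y = a.
Proof.
move=> pa ya; apply/eqP; apply: contraTT pa => ny; rewrite inE.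
by have [z _ za] := connect_last ya ny; apply/set0Pn; exists z; rewrite inE.
Qed.

Lemma Pset_player a : a \in players e -> Pset e a = [set a].
Proof.
move=> pa; apply/setP => b; rewrite mem_Pset inE.
apply/andP/eqP => [[_ /(player_connect_eq pa)] //|->]; by rewrite connect0.
Qed.

Lemma player_or_match y : (y \in players e) || (y \in matches e).
Proof. by rewrite in_setC orbN. Qed.

Lemma matchP x : reflect (exists u, e u x) (x \in matches e).
Proof.
rewrite !inE; apply: (iffP (set0Pn (in_nbrs e x))) => -[u].
  by rewrite inE; exists u.
by exists u; rewrite inE.
Qed.

Lemma edge_match u x : e u x -> x \in matches e.
Proof. by move=> ux; apply/matchP; exists u. Qed.

Lemma Pset_child a x : a \in Pset e x -> x \in matches e ->
  exists2 u, e u x & a \in Pset e u.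
Proof.
rewrite mem_Pset => /andP [pa ax] xm.
have [|u au ux] := connect_last ax.
  by apply: contraTneq xm => <-; rewrite inE pa.
by exists u; rewrite // mem_Pset pa.
Qed.

Definition pick_child (p : pred V) y := odflt y [pick c | e c y && p c].

Lemma pick_childP (p : pred V) y c : e c y -> p c ->
  e (pick_child p y) y /\ p (pick_child p y).
Proof.
move=> cy pc; rewrite /pick_child; case: pickP => [d /andP [] //|none].
by have := none c; rewrite cy pc.
Qed.

Lemma pick_child_toward a y : a \in players e -> y \in matches e -> connect e a y ->
  e (pick_child (connect e a) y) y /\ connect e a (pick_child (connect e a) y).
Proof.
move=> pa ym ay.
have [|c ac cy] := connect_last ay.
  by apply: contraTneq ym => <-; rewrite inE pa.
exact: pick_childP cy ac.
Qed.

Lemma SET_acyclic v w : e v w -> ~~ connect e w v.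
Proof. by case: tourn => _ _ + _; apply. Qed.

Lemma SET_out_uniq v w w' : e v w -> e v w' -> w = w'.
Proof.
move=> vw vw'; case: tourn => _ outdeg _ _.
have /cards1P [z vz] : #|out_nbrs e v| == 1.
  by rewrite outdeg //; apply/set0Pn; exists w; rewrite inE.
have : w \in out_nbrs e v by rewrite inE.
have : w' \in out_nbrs e v by rewrite inE.
by rewrite vz !inE => /eqP -> /eqP ->.
Qed.

Lemma SET_sibling c y : e c y -> exists2 s, e s y & s != c.
Proof.
move=> cy; case: tourn => _ _ _ /(_ y) indeg.
apply: contraNP indeg => none; apply/cards1P; exists c.
apply/setP => s; rewrite !inE; apply/idP/eqP => [sy|-> //].
by apply/eqP/negPn/negP => sc; apply: none; exists s.
Qed.

Lemma connect_comparable a u w : connect e a u -> connect e a w ->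
  connect e u w || connect e w u.
Proof.
move=> /connectP [p ap ->] {u}; elim: p a ap => [|z p IH] a /=; first by move=> _ ->.
move=> /andP [az zp] aw; have [<-|aw'] := eqVneq a w.
  by apply/orP; right; apply/connectP; exists (z :: p) => //=; rewrite az.
have [z' az' z'w] := connect_first aw aw'.
by apply: IH => //; rewrite (SET_out_uniq az az').
Qed.

Lemma siblings_connect_eq x u w a : e u x -> e w x ->
  connect e a u -> connect e a w -> u = w.
Proof.
have below_sibling u' w' : e u' x -> e w' x -> connect e u' w' -> u' = w'.
  move=> u'x w'x /connect_first; case: eqVneq => // _ /(_ isT) [z u'z zw'].
  by rewrite -(SET_out_uniq u'x u'z) in zw'; move: (SET_acyclic w'x); rewrite zw'.
move=> ux wx au aw; case/orP: (connect_comparable au aw) => [uw|wu].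
  exact: below_sibling.
exact/esym/below_sibling.
Qed.

Definition subtree_size v := #|[set u | connect e u v]|.

Lemma subtree_size_lt u v : e u v -> subtree_size u < subtree_size v.
Proof.
move=> uv; apply: proper_card; apply/properP; split.
  by apply/subsetP => z; rewrite !inE => /connect_trans; apply; apply: connect1.
by exists v; rewrite inE ?connect0 // SET_acyclic.
Qed.

Lemma SET_ind (P : V -> Prop) :
  (forall v, (forall u, e u v -> P u) -> P v) -> forall v, P v.
Proof.
move=> IH v; have [n] := ubnP (subtree_size v); elim: n v => // n IHn v vn.
by apply: IH => u /subtree_size_lt uv; apply: IHn; apply: leq_trans uv vn.
Qed.

Lemma bracket_player B a : is_bracket e B -> a \in players e -> B a = a.
Proof. by move=> /andP [/forall_inP pB _] /pB /eqP. Qed.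

Lemma bracket_match B x : is_bracket e B -> x \in matches e ->
  exists2 u, e u x & B x = B u.
Proof.
move=> /andP [_ /forall_inP mB] /mB /exists_inP [u].
by rewrite inE => ux /eqP Bx; exists u.
Qed.

Lemma bracket_Pset B y : is_bracket e B -> B y \in Pset e y.
Proof.
move=> bB; elim/SET_ind: y => y IH; case/orP: (player_or_match y) => [py|ym].
  by rewrite bracket_player // Pset_player // inE.
have [u uy ->] := bracket_match bB ym.
exact: subsetP (Pset_connect (connect1 uy)) _ (IH u uy).
Qed.

Section Follow.

Variable g : V -> V.
Hypothesis g_child : forall y, y \in matches e -> e (g y) y.

Definition follow_step y := if y \in players e then y else g y.

Definition follow y := iter #|V| follow_step y.

Lemma iter_follow_step n y : iter n follow_step y \in players e \/
  n + subtree_size (iter n follow_step y) <= subtree_size y.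
Proof.
elim: n => [|n [IH|IH]] /=; [by right | by left; rewrite /follow_step IH|].
rewrite {1 3}/follow_step; case: ifPn => [|]; first by left.
by rewrite -in_setC => /g_child/subtree_size_lt; right; lia.
Qed.

Lemma follow_player y : follow y \in players e.
Proof.
case: (iter_follow_step #|V| y) => // small.
have : subtree_size y <= #|V| by apply: max_card.
have : 0 < subtree_size (follow y).
  by rewrite card_gt0; apply/set0Pn; exists (follow y); rewrite inE connect0.
rewrite /follow in small *; lia.
Qed.

Lemma follow_id a : a \in players e -> follow a = a.
Proof. by move=> pa; apply: iter_fix; rewrite /follow_step pa. Qed.

Lemma follow_match y : y \in matches e -> follow y = follow (g y).
Proof.
move=> ym; have -> : g y = follow_step y by rewrite /follow_step ifN // -in_setC.
have := follow_player y; rewrite /follow -iterSr iterS => py.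
by rewrite {2}/follow_step py.
Qed.

Lemma bracket_follow : is_bracket e [ffun y => follow y].
Proof.
apply/andP; split; apply/forall_inP => y yP; rewrite ffunE.
  by rewrite follow_id.
by apply/exists_inP; exists (g y); rewrite ?inE ?g_child // ffunE follow_match.
Qed.

Lemma follow_along a u : a \in players e -> connect e a u ->
  (forall z, z \in matches e -> connect e a z -> connect e z u -> connect e a (g z)) ->
  follow u = a.
Proof.
move=> pa; elim/SET_ind: u => u IH au towards.
case/orP: (player_or_match u) => [pu|um].
  by rewrite follow_id // (player_connect_eq pu au).
rewrite follow_match //; apply: IH; [exact: g_child | exact: towards |].
move=> z zm az zgu; apply: towards => //.
exact: connect_trans zgu (connect1 (g_child um)).
Qed.

End Follow.

Lemma follow_eq_off (g1 g2 : V -> V) x :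
  (forall y, y \in matches e -> e (g1 y) y) ->
  (forall y, y \in matches e -> e (g2 y) y) ->
  (forall y, y \in matches e -> y != x -> g1 y = g2 y /\ g1 y != x) ->
  forall y, y != x -> follow g1 y = follow g2 y.
Proof.
move=> g1_child g2_child off; elim/SET_ind => y IH yx.
case/orP: (player_or_match y) => [py|ym]; first by rewrite !follow_id.
have [g12 g1x] := off y ym yx.
rewrite (follow_match g1_child ym) (follow_match g2_child ym) -g12.
by apply: IH; rewrite ?g1_child.
Qed.

Definition margin x := #|Pset e x| - \max_(u in in_nbrs e x) #|Pset e u|.

Lemma escaping_pair (W : {set V}) x : x \in matches e -> #|W| < margin x ->
  exists u1 u2 a1 a2, [/\ e u1 x, e u2 x & u1 != u2] /\
    [/\ a1 \in Pset e u1, a1 \notin W, a2 \in Pset e u2 & a2 \notin W].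
Proof.
move=> xm small; set A := Pset e x :\: W.
have child_small u : e u x -> #|Pset e u| < #|A|.
  move=> ux; have : #|Pset e u| <= \max_(w in in_nbrs e x) #|Pset e w|.
    by apply: (leq_bigmax_cond (F := fun w => #|Pset e w|)); rewrite inE.
  have : #|Pset e x| - #|W| <= #|A|.
    by rewrite cardsD leq_sub2l // subset_leq_card // subsetIr.
  rewrite /margin in small; lia.
have [u0 u0x] := matchP _ xm.
have /card_gt0P [a1] : 0 < #|A| by apply: leq_ltn_trans (child_small u0 u0x).
rewrite in_setD => /andP [a1W a1x].
have [u1 u1x a1u1] := Pset_child a1x xm.
have /subsetPn [a2] : ~~ (A \subset Pset e u1).
  by apply: contraTN (child_small u1 u1x); rewrite -leqNgt => /subset_leq_card.
rewrite in_setD => /andP [a2W a2x] a2u1.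
have [u2 u2x a2u2] := Pset_child a2x xm.
exists u1, u2, a1, a2; split=> //; split=> //.
by apply: contraNneq a2u1 => ->.
Qed.

Section Divert.

Variables (x u1 u2 a1 a2 : V).
Hypotheses (u1x : e u1 x) (u2x : e u2 x) (u12 : u1 != u2).
Hypotheses (a1u1 : a1 \in Pset e u1) (a2u2 : a2 \in Pset e u2).

(* The parent of [x] is won from another child, so that the brackets
   [follow (divert u1)] and [follow (divert u2)] differ at [x] only. *)
Definition divert u y :=
  if y == x then u
  else if e x y then pick_child (predC1 x) y
  else if connect e a1 y then pick_child (connect e a1) y
  else if connect e a2 y then pick_child (connect e a2) y
  else pick_child predT y.

Lemma divert_child u : e u x -> forall y, y \in matches e -> e (divert u y) y.
Proof.
move=> ux y ym; rewrite /divert; case: eqP => [-> //|_].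
have /PsetP [pa1 _] := a1u1; have /PsetP [pa2 _] := a2u2.
case: ifP => [xy|_].
  by have [s sy sx] := SET_sibling xy; case: (@pick_childP (predC1 x) _ _ sy sx).
case: ifP => [a1y|_]; first by case: (pick_child_toward pa1 ym a1y).
case: ifP => [a2y|_]; first by case: (pick_child_toward pa2 ym a2y).
by have [c cy] := matchP _ ym; case: (@pick_childP predT _ _ cy).
Qed.

Lemma divert_x u : divert u x = u.
Proof. by rewrite /divert eqxx. Qed.

Lemma divert_off u y : e u x -> y \in matches e -> y != x -> divert u y != x.
Proof.
move=> ux ym yx; have := divert_child ux ym; rewrite /divert (negbTE yx).
case: ifP => [xy _|nxy cy]; last by apply: contraFneq nxy => <-.
by have [s sy sx] := SET_sibling xy; case: (@pick_childP (predC1 x) _ _ sy sx).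
Qed.

Lemma divert_below u u' z : e u' x -> connect e z u' -> divert u z =
  if connect e a1 z then pick_child (connect e a1) z
  else if connect e a2 z then pick_child (connect e a2) z
  else pick_child predT z.
Proof.
move=> u'x zu'; have zx : connect e z x := connect_trans zu' (connect1 u'x).
rewrite /divert ifN; last by apply: contraNneq (SET_acyclic u'x) => <-.
by rewrite ifN //; apply: contraNN (SET_acyclic u'x) => /connect1/connect_trans; apply.
Qed.

Lemma follow_divert1 : follow (divert u1) x = a1.
Proof.
have /PsetP [pa1 a1c] := a1u1.
rewrite (follow_match (divert_child u1x) (edge_match u1x)) divert_x.
apply: (follow_along (divert_child u1x) pa1 a1c) => z zm a1z zu1.
rewrite (divert_below _ u1x zu1) a1z.
by case: (pick_child_toward pa1 zm a1z).
Qed.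

Lemma follow_divert2 : follow (divert u2) x = a2.
Proof.
have /PsetP [pa1 a1c] := a1u1; have /PsetP [pa2 a2c] := a2u2.
rewrite (follow_match (divert_child u2x) (edge_match u2x)) divert_x.
apply: (follow_along (divert_child u2x) pa2 a2c) => z zm a2z zu2.
have a1z : connect e a1 z = false.
  apply: contraNF u12 => a1z; apply/eqP.
  exact: (siblings_connect_eq u1x u2x a1c (connect_trans a1z zu2)).
rewrite (divert_below _ u2x zu2) a1z a2z.
by case: (pick_child_toward pa2 zm a2z).
Qed.

Lemma follow_divert_off y : y != x -> follow (divert u1) y = follow (divert u2) y.
Proof.
apply: (follow_eq_off (divert_child u1x) (divert_child u2x)) => z zm zx.
by split; [rewrite /divert (negbTE zx) | exact: divert_off].
Qed.

Lemma diverted_brackets : exists B1 B2, [/\ is_bracket e B1, is_bracket e B2,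
  B1 x = a1, B2 x = a2 & forall y, y != x -> B1 y = B2 y].
Proof.
exists [ffun y => follow (divert u1) y], [ffun y => follow (divert u2) y].
split; rewrite ?ffunE ?follow_divert1 ?follow_divert2 //.
- exact: bracket_follow (divert_child u1x).
- exact: bracket_follow (divert_child u2x).
- by move=> y yx; rewrite !ffunE follow_divert_off.
Qed.

End Divert.

Lemma margin_le_resolving (R : realType) (sigma : V -> R) S x :
  resolving e sigma S -> x \in matches e -> margin x <= #|S|.
Proof.
move=> [_ resolves] xm; rewrite leqNgt; apply/negP => small.
pose W := [set B x | B : {ffun V -> V} in S].
have [u1 [u2 [a1 [a2 [[u1x u2x u12] [a1u1 a1W a2u2 a2W]]]]]] :=
  escaping_pair xm (leq_ltn_trans (leq_imset_card _ _) small : #|W| < margin x).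
have [B1 [B2 [bB1 bB2 B1x B2x off]]] := diverted_brackets u1x u2x u12 a1u1 a2u2.
have a12 : a1 != a2.
  apply: contraNneq u12 => a12; apply/eqP.
  have /PsetP [_ a1c] := a1u1; have /PsetP [_ a2c] := a2u2.
  by rewrite a12 in a1c; apply: siblings_connect_eq u1x u2x a1c a2c.
have B12 : B1 != B2 by apply: contraNneq a12 => B12; rewrite -B1x -B2x B12.
have [B BS] := resolves B1 B2 bB1 bB2 B12; apply/negP; rewrite negbK.
have BxW : B x \in W by apply: imset_f.
apply/eqP; apply: (score_eq_off _ _ off); rewrite ?B1x ?B2x.
- by apply: contraNneq a1W => <-.
- by apply: contraNneq a2W => <-.
Qed.

Lemma bound_le_tdim (R : realType) (sigma : V -> R) : bound e <= tdim e sigma.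
Proof.
rewrite /tdim -minEnat; apply: (@le_bigmin _ nat) => [|S /asboolP res].
  apply/bigmax_leqP => x _; rewrite card_ffun.
  apply: leq_trans (leq_subr _ _) (leq_trans (max_card _) _).
  by rewrite -{1}(expn1 #|V|) leq_pexp2l //; apply/card_gt0P; exists x.
by apply/bigmax_leqP => x xm; apply: margin_le_resolving res xm.
Qed.

Definition heavy x :=
  pick_child (fun u => \max_(w in in_nbrs e x) #|Pset e w| <= #|Pset e u|) x.

Definition light x := Pset e x :\: Pset e (heavy x).

Lemma light_Pset x a : a \in light x -> a \in Pset e x.
Proof. by rewrite in_setD => /andP []. Qed.

Lemma heavyP x : x \in matches e ->
  e (heavy x) x /\ #|Pset e (heavy x)| = \max_(w in in_nbrs e x) #|Pset e w|.
Proof.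
move=> xm; have [u ux] := matchP _ xm.
set M := \max_(w in in_nbrs e x) #|Pset e w|.
have [w wx wM] : exists2 w, e w x & M <= #|Pset e w|.
  have [|w] := eq_bigmax_cond (fun w => #|Pset e w|) (_ : 0 < #|in_nbrs e x|).
    by apply/card_gt0P; exists u; rewrite inE.
  by rewrite inE /M => wx ->; exists w.
have [hx Mh] := @pick_childP (fun v => M <= #|Pset e v|) x w wx wM.
split=> //; apply/eqP; rewrite eqn_leq Mh andbT.
by apply: (leq_bigmax_cond (F := fun w => #|Pset e w|)); rewrite inE.
Qed.

Lemma card_light x : x \in matches e -> #|light x| = margin x.
Proof.
move=> xm; have [hx hmax] := heavyP xm.
by rewrite /margin -hmax cardsD (setIidPr (Pset_connect (connect1 hx))).
Qed.

Lemma Pset_sub_light u x : e u x -> u != heavy x -> Pset e u \subset light x.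
Proof.
move=> ux uh; have [hx _] := heavyP (edge_match ux).
apply/subsetP => a au; have /PsetP [_ ac] := au.
rewrite in_setD (subsetP (Pset_connect (connect1 ux))) // andbT.
by apply: contra uh => /PsetP [_ /(siblings_connect_eq ux hx ac) ->].
Qed.

Lemma light_nested x y a : x \in matches e -> y \in matches e -> connect e x y ->
  a \in light x -> a \in light y -> light x \subset light y.
Proof.
move=> xm ym xy ax ay; have [<-|nxy] := eqVneq x y; first exact: subxx.
have [c xc cy] := connect_last xy nxy.
have ch : c != heavy y.
  have ac : a \in Pset e c := subsetP (Pset_connect xc) a (light_Pset ax).
  by apply: contraTneq ay => ch; rewrite /light -ch in_setD ac.
apply: subset_trans (subsetDl _ _) (subset_trans (Pset_connect xc) _).
exact: Pset_sub_light.
Qed.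

Lemma light_laminar : laminar [set light x | x in matches e].
Proof.
move=> _ _ /imsetP [x xm ->] /imsetP [y ym ->].
case: (boolP [disjoint light x & light y]) => //=.
rewrite -setI_eq0 => /set0Pn [a]; rewrite inE => /andP [ax ay].
have /PsetP [_ ac] := light_Pset ax; have /PsetP [_ ac'] := light_Pset ay.
case/orP: (connect_comparable ac ac') => [xy|yx].
  by rewrite (light_nested xm ym xy ax ay).
by rewrite (light_nested ym xm yx ay ax) orbT.
Qed.

Lemma light_coloring : exists k : V -> nat, forall x, x \in matches e ->
  {in light x &, injective k} /\ {in light x, forall a, k a < bound e}.
Proof.
have [|k colored] := laminar_coloring (m := bound e) light_laminar.
  move=> _ /imsetP [x xm ->]; rewrite card_light //.
  exact: (leq_bigmax_cond (F := margin)).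
by exists k => x xm; apply: colored; apply: imset_f.
Qed.

Lemma bracket_heavy B x : is_bracket e B -> x \in matches e ->
  B x \notin light x -> B x = B (heavy x).
Proof.
move=> bB xm Bx; have [hx _] := heavyP xm.
have [u ux Bu] := bracket_match bB xm.
have /PsetP [_ Buc] := bracket_Pset u bB.
have [_ Bhc] : B x \in players e /\ connect e (B x) (heavy x).
  by apply/PsetP; move: Bx; rewrite in_setD bracket_Pset // andbT negbK.
by rewrite Bu (siblings_connect_eq ux hx Buc) // -Bu.
Qed.

Lemma bracket_eq_of_light_cover (S : {set {ffun V -> V}}) B B' :
  (forall x a, x \in matches e -> a \in light x -> exists2 Bi, Bi \in S & Bi x = a) ->
  is_bracket e B -> is_bracket e B' ->
  (forall Bi y, Bi \in S -> y \in matches e -> (Bi y == B y) = (Bi y == B' y)) ->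
  B = B'.
Proof.
move=> cover bB bB' agree; apply/ffunP; elim/SET_ind => x IH.
case/orP: (player_or_match x) => [px|xm]; first by rewrite !bracket_player.
case: (boolP (B x \in light x)) => [BL|BnL].
  have [Bi BiS BiB] := cover x _ xm BL.
  by move: (agree Bi x BiS xm); rewrite BiB eqxx => /esym/eqP.
case: (boolP (B' x \in light x)) => [BL'|BnL'].
  have [Bi BiS BiB] := cover x _ xm BL'.
  by move: (agree Bi x BiS xm); rewrite BiB eqxx => /eqP.
rewrite (bracket_heavy bB xm BnL) (bracket_heavy bB' xm BnL').
by apply: IH; case: (heavyP xm).
Qed.

Section LeadBrackets.

Variable k : V -> nat.
Hypothesis k_inj : forall x, x \in matches e -> {in light x &, injective k}.

Definition lead (i : nat) x :=
  if [pick a in light x | k a == i] is Some a then pick_child (connect e a) x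
  else heavy x.

Lemma lead_light i x a : x \in matches e -> a \in light x -> k a = i ->
  lead i x = pick_child (connect e a) x.
Proof.
move=> xm ax ka; rewrite /lead; case: pickP => [b /andP [bx /eqP kb]|none].
  by rewrite (k_inj xm bx ax) // kb ka.
by have := none a; rewrite ax ka eqxx.
Qed.

Lemma lead_heavy i x : (forall a, a \in light x -> k a != i) -> lead i x = heavy x.
Proof.
by move=> none; rewrite /lead; case: pickP => // b /andP [/none /negbTE ->].
Qed.

Lemma lead_child i x : x \in matches e -> e (lead i x) x.
Proof.
move=> xm; rewrite /lead; case: pickP => [a /andP [ax _]|_]; last by case: (heavyP xm).
have /PsetP [pa ac] := light_Pset ax.
by case: (pick_child_toward pa xm ac).
Qed.

Lemma follow_lead_Pset i w a : {in Pset e w &, injective k} ->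
  a \in Pset e w -> k a = i -> follow (lead i) w = a.
Proof.
elim/SET_ind: w => w IH kw aw ka.
case/orP: (player_or_match w) => [pw|wm].
  by move: aw; rewrite Pset_player // inE => /eqP ->; rewrite follow_id.
have /PsetP [pa aw'] := aw.
rewrite (follow_match (lead_child i) wm).
have sub_w u : e u w -> {in Pset e u &, injective k}.
  by move=> uw; apply: sub_in2 kw => b; apply/subsetP/Pset_connect/connect1.
case: (boolP (a \in light w)) => [aL|aH].
  rewrite (lead_light wm aL ka); have [cw ac] := pick_child_toward pa wm aw'.
  by apply: IH; rewrite ?mem_Pset ?pa //; apply: sub_w.
have [hw _] := heavyP wm.
rewrite lead_heavy; last first.
  move=> b bL; apply: contraNneq aH => kb.
  by rewrite -(kw b a) ?kb // light_Pset.
by apply: IH => //; [apply: sub_w | move: aH; rewrite in_setD aw andbT negbK].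
Qed.

Lemma follow_lead_light x a : x \in matches e -> a \in light x ->
  follow (lead (k a)) x = a.
Proof.
move=> xm ax; have /PsetP [pa ax'] := light_Pset ax.
rewrite (follow_match (lead_child _) xm) (lead_light xm ax erefl).
have [cx ac] := pick_child_toward pa xm ax'.
have ch : pick_child (connect e a) x != heavy x.
  by apply: contraTneq ax => ch; rewrite /light -ch in_setD mem_Pset pa ac.
apply: follow_lead_Pset; rewrite ?mem_Pset ?pa //.
by apply: sub_in2 (k_inj xm); apply/subsetP; apply: Pset_sub_light.
Qed.

End LeadBrackets.

Lemma lead_brackets_resolving (R : realType) (k : V -> nat) :
  (forall x, x \in matches e ->
     {in light x &, injective k} /\ {in light x, forall a, k a < bound e}) ->
  resolving e (@pow2_weight R V)
    [set [ffun y => follow (lead k i) y] | i : 'I_(bound e)].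
Proof.
move=> colored; have k_inj x xm := (colored x xm).1.
set S := [set _ | i : 'I_(bound e)].
split=> [_ /imsetP [i _ ->]|B B' bB bB' BB'].
  by apply: bracket_follow => y; apply: lead_child.
apply: contraNP BB' => none; apply/eqP.
apply: (bracket_eq_of_light_cover (S := S) _ bB bB') => [x a xm ax|Bi y BiS ym].
  pose i := Ordinal ((colored x xm).2 a ax).
  exists [ffun y => follow (lead k i) y]; first by apply/imsetP; exists i.
  by rewrite ffunE follow_lead_light.
apply: (@score_pow2_agree R) ym; apply/eqP/negPn/negP => neq.
by apply: none; exists Bi.
Qed.

End Tournament.

Theorem theorem1p8 (R : realType) (V : finType) (e : rel V) :
  is_SET e -> 2 <= #|players e| ->
  (forall sigma : V -> R, scoring_system e sigma -> bound e <= tdim e sigma) /\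
  (exists sigma : V -> R, scoring_system e sigma /\ tdim e sigma = bound e).
Proof.
move=> tourn _; split=> [sigma _|]; first exact: bound_le_tdim.
exists (@pow2_weight R V); split=> [x _|]; first by rewrite ltr0n expn_gt0.
apply/eqP; rewrite eqn_leq bound_le_tdim // andbT.
have [k colored] := light_coloring tourn.
apply: leq_trans (tdim_le_card (lead_brackets_resolving tourn R colored)) _.
by apply: leq_trans (leq_imset_card _ _) _; rewrite card_ord.
Qed.
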